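(* Let $$G(t)=\sum_{n=1}^{\infty}\exp\big(t-\pi n^2 e^{4t}\big)\big(16\pi^2 n^4 e^{8t}-24\pi n^2 e^{4t}\big),\qquad t\ge 0,$$ and for $z\in\mathbb{C}$ let $\eta(z)=\int_0^\infty G(t)\cosh(zt)\,dt$. Then for every real $y$ there exists $\varepsilon>0$ such that $\eta(x+iy)\neq 0$ for all real $x$ with $0<|x|<\varepsilon$.
   Context: The function $\eta$ satisfies $\eta(z)=\xi\big(\tfrac{z+1}{2}\big)$, where $\xi(s)=\tfrac12 s(s-1)\pi^{-s/2}\Gamma(s/2)\zeta(s)$ is Riemann's xi-function; the line $\operatorname{Re}z=0$ corresponds to the critical line $\operatorname{Re}s=1/2$. *)

From Stdlib Require Import Reals.
From Coquelicot Require Import Coquelicot.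
Open Scope R_scope.

Definition G_term (t : R) (n : nat) : R :=
  exp (t - PI * (INR n)^2 * exp (4*t)) *
  (16 * PI^2 * (INR n)^4 * exp (8*t) - 24 * PI * (INR n)^2 * exp (4*t)).

Definition G (t : R) : R := Series (fun k => G_term t (S k)).

Definition Cexp (z : Complex.C) : Complex.C :=
  (exp (Re z) * cos (Im z), exp (Re z) * sin (Im z)).
Definition Ccosh (z : Complex.C) : Complex.C :=
  Cmult (/2) (Cplus (Cexp z) (Cexp (Copp z))).

Definition eta (z : Complex.C) : Complex.C :=
  RInt_gen (V := C_R_CompleteNormedModule)
    (fun t : R => Cmult (RtoC (G t)) (Ccosh (Cmult z (RtoC t))))
    (at_point 0) (Rbar_locally p_infty).

(* For z = x + iy, cosh (z t) = cosh (x t) cos (y t) + i sinh (x t) sin (y t), so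
   eta (x + iy) = int G(t) cos(yt) cosh(xt) dt + i int G(t) sin(yt) sinh(xt) dt.
   Since G decays faster than every exponential, both integrals can be expanded in x under the
   integral sign: the k-th coefficient is cosh^(k)(0), resp. sinh^(k)(0), times the k-th moment of
   G(t) cos(yt), resp. G(t) sin(yt), and the remainder after order m is O(|x|^(m+1)).
   If some coefficient is nonzero, the first one dominates eta (x + iy) for small x <> 0.
   If all vanish, then so do the even moments of G(t) cos(yt) and the odd moments of G(t) sin(yt);
   expanding cos (y t) and sin (y t) in the same way then gives
   int G = int G cos(yt) cos(yt) + int G sin(yt) sin(yt) = 0, contradicting G > 0. *)

From Stdlib Require Import Reals Factorial Lra Lia Psatz Wf_nat Classical.
From Coquelicot Require Import Coquelicot.
Open Scope R_scope.

Lemma exp_le_compat (x y : R) : x <= y -> exp x <= exp y.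
Proof. intros [Hlt | ->]; [left; apply exp_increasing, Hlt | lra]. Qed.

Lemma pow_div_fact_le_exp (a : R) (N : nat) : 0 <= a -> a ^ N / INR (fact N) <= exp a.
Proof.
  intros Ha. eapply Rle_trans; [| exact (exp_ge_taylor a N Ha)].
  destruct N as [|N]; [right; reflexivity|]. rewrite tech5.
  enough (0 <= sum_f_R0 (fun k => a ^ k / INR (fact k)) N) by lra.
  apply cond_pos_sum. intros k.
  apply Rdiv_le_0_compat; [apply pow_le; lra | apply INR_fact_lt_0].
Qed.

Lemma pow_le_fact_mul_exp (a : R) (N : nat) : 0 <= a -> a ^ N <= INR (fact N) * exp a.
Proof.
  intros Ha. pose proof (INR_fact_lt_0 N).
  apply (Rmult_le_reg_r (/ INR (fact N))); [apply Rinv_0_lt_compat; lra |].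
  replace (INR (fact N) * exp a * / INR (fact N)) with (exp a) by (field; lra).
  exact (pow_div_fact_le_exp a N Ha).
Qed.

Lemma pow_div_fact_le_scaled_exp (a r t : R) (N : nat) : 0 <= a -> 0 < r -> 0 <= t ->
  (a * t) ^ N / INR (fact N) <= (a / r) ^ N * exp (r * t).
Proof.
  intros Ha Hr Ht.
  assert (E : (a * t) ^ N = (a / r) ^ N * (r * t) ^ N)
    by (rewrite <- Rpow_mult_distr; f_equal; field; lra).
  rewrite E; unfold Rdiv at 1; rewrite Rmult_assoc.
  apply Rmult_le_compat_l.
  - apply pow_le, Rdiv_le_0_compat; lra.
  - apply pow_div_fact_le_exp; nra.
Qed.

Lemma exp_neg_le_fact_div_pow (a : R) (p : nat) : 0 < a -> exp (- a) <= INR (fact p) / a ^ p.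
Proof.
  intros Ha. pose proof (pow_div_fact_le_exp a p (Rlt_le _ _ Ha)) as H.
  pose proof (INR_fact_lt_0 p). pose proof (pow_lt a p Ha). pose proof (exp_pos a).
  rewrite exp_Ropp. apply (Rmult_le_reg_r (exp a * a ^ p / INR (fact p))).
  - apply Rdiv_lt_0_compat; nra.
  - replace (/ exp a * (exp a * a ^ p / INR (fact p))) with (a ^ p / INR (fact p)) by (field; lra).
    replace (INR (fact p) / a ^ p * (exp a * a ^ p / INR (fact p))) with (exp a) by (field; lra).
    exact H.
Qed.

Lemma exp_INR_mult (n : nat) (a : R) : exp (INR n * a) = exp a ^ n.
Proof.
  induction n as [|n IH]; [simpl; rewrite Rmult_0_l; apply exp_0 |].
  rewrite S_INR, Rmult_plus_distr_r, Rmult_1_l, exp_plus, IH. simpl; ring.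
Qed.

(** * Taylor polynomials at 0 *)

Definition taylor_poly (f : R -> R) (n : nat) (u : R) : R :=
  sum_f_R0 (fun k => u ^ k / INR (fact k) * Derive_n f k 0) n.

Lemma taylor_poly_at_0 (f : R -> R) (n : nat) : taylor_poly f n 0 = f 0.
Proof.
  unfold taylor_poly; induction n as [|n IH]; simpl sum_f_R0.
  - simpl; field.
  - rewrite IH; simpl; unfold Rdiv; ring.
Qed.

Lemma taylor_remainder_le_nonneg (f : R -> R) (n : nat) (u M : R) : 0 <= u ->
  (forall k t, ex_derive_n f k t) ->
  (forall t, 0 <= t <= u -> Rabs (Derive_n f (S n) t) <= M) ->
  Rabs (f u - taylor_poly f n u) <= u ^ S n / INR (fact (S n)) * M.
Proof.
  intros Hu Hf HM. destruct Hu as [Hu | <-].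
  - destruct (Taylor_Lagrange f n 0 u Hu (fun t _ k _ => Hf k t)) as [z [Hz ->]].
    rewrite Rminus_0_r; fold (taylor_poly f n u).
    replace (taylor_poly f n u + u ^ S n / INR (fact (S n)) * Derive_n f (S n) z
               - taylor_poly f n u)
      with (u ^ S n / INR (fact (S n)) * Derive_n f (S n) z) by ring.
    assert (Hc : 0 <= u ^ S n / INR (fact (S n)))
      by (apply Rdiv_le_0_compat; [apply pow_le; lra | apply INR_fact_lt_0]).
    rewrite Rabs_mult, (Rabs_pos_eq _ Hc).
    apply Rmult_le_compat_l; [exact Hc | apply HM; lra].
  - rewrite taylor_poly_at_0, Rminus_diag, Rabs_R0. simpl; unfold Rdiv; lra.
Qed.

Lemma taylor_poly_comp_opp (f : R -> R) (n : nat) (u : R) :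
  (forall k t, ex_derive_n f k t) -> taylor_poly (fun v => f (- v)) n (- u) = taylor_poly f n u.
Proof.
  intros Hf. apply sum_eq. intros k _.
  rewrite Derive_n_comp_opp by (apply filter_forall; intros; apply Hf).
  rewrite Ropp_0. replace (- u) with (-1 * u) by ring. rewrite Rpow_mult_distr.
  assert (Hsq : (-1) ^ k * (-1) ^ k = 1)
    by (rewrite <- Rpow_mult_distr; replace (-1 * -1) with 1 by ring; apply pow1).
  transitivity ((-1) ^ k * (-1) ^ k * (u ^ k / INR (fact k) * Derive_n f k 0));
    [unfold Rdiv; ring | rewrite Hsq; ring].
Qed.

Lemma taylor_remainder_le (f : R -> R) (n : nat) (u M : R) :
  (forall k t, ex_derive_n f k t) ->
  (forall t, Rabs t <= Rabs u -> Rabs (Derive_n f (S n) t) <= M) ->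
  Rabs (f u - taylor_poly f n u) <= Rabs u ^ S n / INR (fact (S n)) * M.
Proof.
  intros Hf HM. destruct (Rle_or_lt 0 u) as [Hu | Hu].
  - rewrite (Rabs_pos_eq u Hu).
    apply taylor_remainder_le_nonneg; [exact Hu | exact Hf |].
    intros t Ht. apply HM. rewrite !Rabs_pos_eq; lra.
  - rewrite (Rabs_left u Hu), <- (taylor_poly_comp_opp f n u Hf).
    rewrite <- (Ropp_involutive u) at 1.
    apply (taylor_remainder_le_nonneg (fun v => f (- v))); [lra | |].
    + intros k t. apply ex_derive_n_comp_opp, filter_forall. intros; apply Hf.
    + intros t Ht. rewrite Derive_n_comp_opp by (apply filter_forall; intros; apply Hf).
      rewrite Rabs_mult, pow_1_abs, Rmult_1_l. apply HM.
      rewrite Rabs_Ropp, Rabs_pos_eq, Rabs_left; lra.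
Qed.

Definition smooth_exp_bounded (f : R -> R) : Prop :=
  (forall k t, ex_derive_n f k t) /\ (forall k t, Rabs (Derive_n f k t) <= exp (Rabs t)).

Lemma smooth_exp_bounded_taylor (f : R -> R) (n : nat) (u : R) : smooth_exp_bounded f ->
  Rabs (f u - taylor_poly f n u) <= Rabs u ^ S n / INR (fact (S n)) * exp (Rabs u).
Proof.
  intros [Hf Hb]. apply taylor_remainder_le; [exact Hf |].
  intros t Ht. eapply Rle_trans; [apply Hb | apply exp_le_compat, Ht].
Qed.

Lemma smooth_exp_bounded_taylor_scaled (f : R -> R) (n : nat) (s r t : R) :
  smooth_exp_bounded f -> 0 < r -> 0 <= t ->
  Rabs (f (s * t) - taylor_poly f n (s * t)) <= (Rabs s / r) ^ S n * exp ((r + Rabs s) * t).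
Proof.
  intros Hf Hr Ht. eapply Rle_trans; [apply smooth_exp_bounded_taylor, Hf |].
  rewrite Rabs_mult, (Rabs_pos_eq t Ht), Rmult_plus_distr_r, exp_plus, <- Rmult_assoc.
  apply Rmult_le_compat_r; [left; apply exp_pos |].
  apply pow_div_fact_le_scaled_exp; [apply Rabs_pos | exact Hr | exact Ht].
Qed.

Lemma smooth_exp_bounded_continuous (f : R -> R) (x : R) : smooth_exp_bounded f -> continuous f x.
Proof. intros [Hf _]. apply (ex_derive_continuous (V := R_NormedModule)), (Hf 1%nat x). Qed.

Lemma smooth_exp_bounded_abs_le (f : R -> R) (x : R) :
  smooth_exp_bounded f -> Rabs (f x) <= exp (Rabs x).
Proof. intros [_ Hb]. exact (Hb 0%nat x). Qed.

Section Second_order.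

Variables (f f' : R -> R) (s : R).
Hypothesis f_derive : forall x, is_derive f x (f' x).
Hypothesis f'_derive : forall x, is_derive f' x (s * f x).

Lemma Derive_n_second_order (j : nat) (x : R) :
  Derive_n f (2 * j) x = s ^ j * f x /\ Derive_n f (S (2 * j)) x = s ^ j * f' x.
Proof.
  revert x; induction j as [|j IH]; intros x.
  - split; [simpl; ring |]. simpl; rewrite Rmult_1_l. apply is_derive_unique, f_derive.
  - assert (Heven : forall x, Derive_n f (2 * S j) x = s ^ S j * f x).
    { intros y. replace (2 * S j)%nat with (S (S (2 * j))) by lia. simpl Derive_n.
      rewrite (Derive_ext _ (fun z => s ^ j * f' z)) by (intros; apply IH).
      rewrite Derive_scal, (is_derive_unique _ _ _ (f'_derive y)). simpl; ring. }
    split; [apply Heven |]. simpl Derive_n at 1.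
    rewrite (Derive_ext _ (fun z => s ^ S j * f z)) by apply Heven.
    rewrite Derive_scal, (is_derive_unique _ _ _ (f_derive x)). reflexivity.
Qed.

Lemma ex_derive_n_second_order (k : nat) (x : R) : ex_derive_n f k x.
Proof.
  destruct k as [|k]; [exact I |]. simpl.
  destruct (Nat.Even_or_Odd k) as [[j ->] | [j ->]].
  - apply (ex_derive_ext (fun y => s ^ j * f y)); [intros; symmetry; apply Derive_n_second_order |].
    apply ex_derive_scal. eexists; apply f_derive.
  - rewrite Nat.add_1_r.
    apply (ex_derive_ext (fun y => s ^ j * f' y)); [intros; symmetry; apply Derive_n_second_order |].
    apply ex_derive_scal. eexists; apply f'_derive.
Qed.

Lemma smooth_exp_bounded_second_order : Rabs s = 1 ->
  (forall x, Rabs (f x) <= exp (Rabs x)) -> (forall x, Rabs (f' x) <= exp (Rabs x)) ->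
  smooth_exp_bounded f.
Proof.
  intros Hs Hf Hf'. split; [exact ex_derive_n_second_order |]. intros k x.
  destruct (Nat.Even_or_Odd k) as [[j ->] | [j ->]]; [| rewrite Nat.add_1_r];
    [rewrite (proj1 (Derive_n_second_order j x)) | rewrite (proj2 (Derive_n_second_order j x))];
    rewrite Rabs_mult, <- RPow_abs, Hs, pow1, Rmult_1_l; auto.
Qed.

End Second_order.

Lemma is_derive_opp_sin (x : R) : is_derive (fun y => - sin y) x (-1 * cos x).
Proof. auto_derive; [exact I | ring]. Qed.

Lemma is_derive_cos_scal (x : R) : is_derive cos x (-1 * sin x).
Proof. auto_derive; [exact I | ring]. Qed.

Lemma is_derive_cosh (x : R) : is_derive cosh x (sinh x).
Proof. apply is_derive_Reals, derivable_pt_lim_cosh. Qed.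

Lemma is_derive_sinh (x : R) : is_derive sinh x (cosh x).
Proof. apply is_derive_Reals, derivable_pt_lim_sinh. Qed.

Lemma is_derive_cosh_scal (x : R) : is_derive cosh x (1 * sinh x).
Proof. rewrite Rmult_1_l; apply is_derive_cosh. Qed.

Lemma is_derive_sinh_scal (x : R) : is_derive sinh x (1 * cosh x).
Proof. rewrite Rmult_1_l; apply is_derive_sinh. Qed.

Lemma one_le_exp_abs (x : R) : 1 <= exp (Rabs x).
Proof. rewrite <- exp_0. apply exp_le_compat, Rabs_pos. Qed.

Lemma Rabs_cos_le_exp (x : R) : Rabs (cos x) <= exp (Rabs x).
Proof. pose proof (one_le_exp_abs x). pose proof (COS_bound x). apply Rabs_le; lra. Qed.

Lemma Rabs_sin_le_exp (x : R) : Rabs (sin x) <= exp (Rabs x).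
Proof. pose proof (one_le_exp_abs x). pose proof (SIN_bound x). apply Rabs_le; lra. Qed.

Lemma Rabs_cosh_le_exp (x : R) : Rabs (cosh x) <= exp (Rabs x).
Proof.
  pose proof (exp_le_compat _ _ (Rle_abs x)). pose proof (exp_le_compat _ _ (Rle_abs (- x))).
  rewrite Rabs_Ropp in *. pose proof (exp_pos x). pose proof (exp_pos (- x)).
  unfold cosh. apply Rabs_le; lra.
Qed.

Lemma Rabs_sinh_le_exp (x : R) : Rabs (sinh x) <= exp (Rabs x).
Proof.
  pose proof (exp_le_compat _ _ (Rle_abs x)). pose proof (exp_le_compat _ _ (Rle_abs (- x))).
  rewrite Rabs_Ropp in *. pose proof (exp_pos x). pose proof (exp_pos (- x)).
  unfold sinh. apply Rabs_le; lra.
Qed.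

Lemma cos_smooth_exp_bounded : smooth_exp_bounded cos.
Proof.
  apply (smooth_exp_bounded_second_order cos (fun y => - sin y) (-1) is_derive_cos is_derive_opp_sin
    Rabs_m1 Rabs_cos_le_exp).
  intros x; cbv beta; rewrite Rabs_Ropp; apply Rabs_sin_le_exp.
Qed.

Lemma sin_smooth_exp_bounded : smooth_exp_bounded sin.
Proof.
  exact (smooth_exp_bounded_second_order sin cos (-1) is_derive_sin is_derive_cos_scal Rabs_m1
    Rabs_sin_le_exp Rabs_cos_le_exp).
Qed.

Lemma cosh_smooth_exp_bounded : smooth_exp_bounded cosh.
Proof.
  exact (smooth_exp_bounded_second_order cosh sinh 1 is_derive_cosh is_derive_sinh_scal Rabs_R1
    Rabs_cosh_le_exp Rabs_sinh_le_exp).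
Qed.

Lemma sinh_smooth_exp_bounded : smooth_exp_bounded sinh.
Proof.
  exact (smooth_exp_bounded_second_order sinh cosh 1 is_derive_sinh is_derive_cosh_scal Rabs_R1
    Rabs_sinh_le_exp Rabs_cosh_le_exp).
Qed.

Lemma Derive_n_cos_0 (k : nat) : Derive_n cos k 0 = (-1) ^ Nat.div2 k * Derive_n cosh k 0.
Proof.
  destruct (Nat.Even_or_Odd k) as [[j ->] | [j ->]].
  - rewrite Nat.div2_double,
      (proj1 (Derive_n_second_order _ _ _ is_derive_cos is_derive_opp_sin j 0)),
      (proj1 (Derive_n_second_order _ _ _ is_derive_cosh is_derive_sinh_scal j 0)).
    rewrite cos_0, cosh_0, pow1. ring.
  - rewrite Nat.add_1_r, Nat.div2_succ_double,
      (proj2 (Derive_n_second_order _ _ _ is_derive_cos is_derive_opp_sin j 0)),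
      (proj2 (Derive_n_second_order _ _ _ is_derive_cosh is_derive_sinh_scal j 0)).
    rewrite sin_0, sinh_0. ring.
Qed.

Lemma Derive_n_sin_0 (k : nat) : Derive_n sin k 0 = (-1) ^ Nat.div2 k * Derive_n sinh k 0.
Proof.
  destruct (Nat.Even_or_Odd k) as [[j ->] | [j ->]].
  - rewrite Nat.div2_double,
      (proj1 (Derive_n_second_order _ _ _ is_derive_sin is_derive_cos_scal j 0)),
      (proj1 (Derive_n_second_order _ _ _ is_derive_sinh is_derive_cosh_scal j 0)).
    rewrite sin_0, sinh_0. ring.
  - rewrite Nat.add_1_r, Nat.div2_succ_double,
      (proj2 (Derive_n_second_order _ _ _ is_derive_sin is_derive_cos_scal j 0)),
      (proj2 (Derive_n_second_order _ _ _ is_derive_sinh is_derive_cosh_scal j 0)).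
    rewrite cos_0, cosh_0, pow1. ring.
Qed.

(** * Improper integrals over [0, +oo) *)

Lemma filter_prod_at_point_p_infty (a : R) (P : R * R -> Prop) :
  (forall b, a < b -> P (a, b)) -> filter_prod (at_point a) (Rbar_locally p_infty) P.
Proof.
  intros HP. apply Filter_prod with (fun u => u = a) (fun v => a < v).
  - reflexivity.
  - exists a. tauto.
  - intros u v -> Hv. apply HP, Hv.
Qed.

Lemma is_RInt_exp_neg (K u v : R) :
  is_RInt (fun t => K * exp (- t)) u v (K * exp (- u) - K * exp (- v)).
Proof.
  replace (K * exp (- u) - K * exp (- v)) with (minus (- K * exp (- v)) (- K * exp (- u)))
    by (unfold minus, plus, opp; simpl; ring).
  apply (is_RInt_derive (fun t => - K * exp (- t))).
  - intros x _. auto_derive; [exact I | ring].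
  - intros x _. apply (ex_derive_continuous (V := R_NormedModule)). auto_derive. exact I.
Qed.

Lemma is_lim_exp_neg (K : R) : is_lim (fun t => K * exp (- t)) p_infty 0.
Proof.
  replace (Finite 0) with (Rbar_mult K 0) by (simpl; f_equal; ring).
  apply (is_lim_scal_l (fun t => exp (- t))).
  apply (is_lim_comp exp Ropp p_infty 0 m_infty).
  - exact is_lim_exp_m.
  - apply (is_lim_opp (fun t => t) p_infty p_infty), is_lim_id.
  - exists 0. intros; discriminate.
Qed.

Lemma is_RInt_gen_exp_neg (K a : R) :
  is_RInt_gen (fun t => K * exp (- t)) (at_point a) (Rbar_locally p_infty) (K * exp (- a)).
Proof.
  set (F := fun t => - K * exp (- t)).
  assert (HF : forall t, is_derive F t (K * exp (- t)))
    by (intros; unfold F; auto_derive; [exact I | ring]).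
  apply (is_RInt_gen_ext (Derive F)).
  - apply filter_forall. intros ab x _. apply is_derive_unique, HF.
  - replace (K * exp (- a)) with (0 - F a) by (unfold F; ring).
    apply is_RInt_gen_Derive.
    + apply filter_forall. intros ab x _. eexists; apply HF.
    + apply filter_forall. intros ab x _.
      apply (continuous_ext (fun t => K * exp (- t))); [intros; symmetry; apply is_derive_unique, HF |].
      apply (ex_derive_continuous (V := R_NormedModule)). auto_derive. exact I.
    + intros P HP. exact (locally_singleton _ _ HP).
    + exact (is_lim_exp_neg (- K)).
Qed.

Lemma is_RInt_gen_abs_le_exp (f : R -> R) (a K l : R) :
  is_RInt_gen f (at_point a) (Rbar_locally p_infty) l ->
  (forall t, a <= t -> Rabs (f t) <= K * exp (- t)) -> Rabs l <= K * exp (- a).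
Proof.
  intros Hf Hb.
  apply (RInt_gen_norm (Fa := at_point a) (Fb := Rbar_locally p_infty) f (fun t => K * exp (- t)) l _);
    [| | exact Hf | apply is_RInt_gen_exp_neg].
  - apply filter_prod_at_point_p_infty. simpl; intros; lra.
  - apply filter_prod_at_point_p_infty. simpl; intros b _ x Hx. apply Hb; lra.
Qed.

Lemma is_RInt_gen_ge_0 (f : R -> R) (a l : R) :
  is_RInt_gen f (at_point a) (Rbar_locally p_infty) l -> (forall t, a <= t -> 0 <= f t) -> 0 <= l.
Proof.
  intros Hf Hpos.
  assert (Habs : Rabs l <= l).
  { apply (RInt_gen_norm (Fa := at_point a) (Fb := Rbar_locally p_infty) f f l l);
      [| | exact Hf | exact Hf].
    - apply filter_prod_at_point_p_infty. simpl; intros; lra.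
    - apply filter_prod_at_point_p_infty. simpl; intros b _ x Hx.
      apply Req_le, Rabs_pos_eq, Hpos; lra. }
  pose proof (Rabs_pos l). lra.
Qed.

Lemma exp_neg_lt_eventually (K eps a : R) : 0 < eps -> exists M, a <= M /\ K * exp (- M) < eps.
Proof.
  intros Heps. exists (Rmax a (K / eps)). split; [apply Rmax_l |].
  set (M := Rmax a (K / eps)).
  assert (HM : K / eps <= M) by apply Rmax_r.
  pose proof (exp_ineq1_le M). pose proof (exp_pos M).
  rewrite exp_Ropp. apply (Rmult_lt_reg_r (exp M)); [lra |].
  rewrite Rmult_assoc, Rinv_l by lra.
  apply (Rmult_le_compat_l eps) in HM; [| lra].
  replace (eps * (K / eps)) with K in HM by (field; lra). nra.
Qed.

Lemma ex_RInt_gen_exp_bound (f : R -> R) (a K : R) :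
  (forall t, continuous f t) -> (forall t, a <= t -> Rabs (f t) <= K * exp (- t)) ->
  ex_RInt_gen f (at_point a) (Rbar_locally p_infty).
Proof.
  intros Hc Hb.
  assert (HK : 0 <= K).
  { pose proof (Hb a (Rle_refl a)). pose proof (Rabs_pos (f a)). pose proof (exp_pos (- a)). nra. }
  assert (Hex : forall u v, ex_RInt f u v)
    by (intros; apply (ex_RInt_continuous (V := R_CompleteNormedModule)); intros; apply Hc).
  set (F := fun b => RInt f a b).
  assert (Htail : forall u v, a <= u <= v -> Rabs (F v - F u) <= K * exp (- u)).
  { intros u v Huv. unfold F. rewrite <- (RInt_Chasles f a u v) by apply Hex.
    change (plus (RInt f a u) (RInt f u v)) with (RInt f a u + RInt f u v).
    rewrite Rplus_comm; unfold Rminus; rewrite Rplus_assoc, Rplus_opp_r, Rplus_0_r.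
    eapply Rle_trans.
    - apply (norm_RInt_le f (fun t => K * exp (- t)) u v); [lra | intros x Hx; apply Hb; lra | |].
      + apply (RInt_correct (V := R_CompleteNormedModule)), Hex.
      + apply is_RInt_exp_neg.
    - pose proof (exp_pos (- v)). nra. }
  set (FF := filtermap F (Rbar_locally p_infty)).
  assert (HFF : ProperFilter FF) by (apply filtermap_proper_filter, Rbar_locally_filter).
  assert (Hcauchy : cauchy FF).
  { intros eps. destruct (exp_neg_lt_eventually K eps a (cond_pos eps)) as [M [HaM HM]].
    exists (F M), M. intros b Hb'.
    apply (Rle_lt_trans _ (K * exp (- M))); [apply Htail; lra | exact HM]. }
  exists (lim FF). intros P [eps HP].
  apply Filter_prod with (fun u => u = a) (fun b => ball (lim FF) eps (F b)).
  - reflexivity.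
  - exact (complete_cauchy FF HFF Hcauchy eps).
  - intros u v -> Hv. exists (F v).
    split; [apply (RInt_correct (V := R_CompleteNormedModule)), Hex | apply HP, Hv].
Qed.

(** * Taylor expansion under the integral sign *)

Definition rapid_decay (w : R -> R) : Prop :=
  forall L, exists C, forall t, 0 <= t -> Rabs (w t) <= C * exp (- (L * t)).

Definition moment (w : R -> R) (k : nat) : R :=
  RInt_gen (fun t => w t * t ^ k) (at_point 0) (Rbar_locally p_infty).

Lemma continuous_mult_pow (w : R -> R) (k : nat) (t : R) :
  continuous w t -> continuous (fun t => w t * t ^ k) t.
Proof.
  intros Hw. apply (continuous_mult (K := R_AbsRing)); [exact Hw |].
  apply (ex_derive_continuous (V := R_NormedModule)). auto_derive. exact I.
Qed.

Lemma is_RInt_gen_moment (w : R -> R) (k : nat) :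
  (forall t, continuous w t) -> rapid_decay w ->
  is_RInt_gen (fun t => w t * t ^ k) (at_point 0) (Rbar_locally p_infty) (moment w k).
Proof.
  intros Hc Hw. destruct (Hw 2) as [C HC].
  apply (RInt_gen_correct (V := R_CompleteNormedModule)).
  apply (ex_RInt_gen_exp_bound _ 0 (C * INR (fact k))).
  - intros t. apply continuous_mult_pow, Hc.
  - intros t Ht. rewrite Rabs_mult, (Rabs_pos_eq (t ^ k)) by (apply pow_le, Ht).
    assert (Hexp : exp (- t) = exp (- (2 * t)) * exp t) by (rewrite <- exp_plus; f_equal; ring).
    replace (C * INR (fact k) * exp (- t)) with (C * exp (- (2 * t)) * (INR (fact k) * exp t))
      by (rewrite Hexp; ring).
    apply Rmult_le_compat; [apply Rabs_pos | apply pow_le, Ht | apply HC, Ht |].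
    apply pow_le_fact_mul_exp, Ht.
Qed.

Lemma is_RInt_gen_sum_f_R0 {Fa Fb : (R -> Prop) -> Prop} {FFa : Filter Fa} {FFb : Filter Fb}
  (g : nat -> R -> R) (c I : nat -> R) (n : nat) :
  (forall k, is_RInt_gen (g k) Fa Fb (I k)) ->
  is_RInt_gen (fun t => sum_f_R0 (fun k => c k * g k t) n) Fa Fb (sum_f_R0 (fun k => c k * I k) n).
Proof.
  intros Hg. induction n as [|n IH]; simpl.
  - exact (is_RInt_gen_scal (V := R_NormedModule) _ (c 0%nat) _ (Hg 0%nat)).
  - exact (is_RInt_gen_plus (V := R_NormedModule) _ _ _ _ IH
      (is_RInt_gen_scal (V := R_NormedModule) _ (c (S n)) _ (Hg (S n)))).
Qed.

Lemma taylor_poly_scaled (psi : R -> R) (n : nat) (s t W : R) :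
  W * taylor_poly psi n (s * t) =
  sum_f_R0 (fun k => s ^ k / INR (fact k) * Derive_n psi k 0 * (W * t ^ k)) n.
Proof.
  unfold taylor_poly. induction n as [|n IH]; simpl sum_f_R0.
  - simpl; unfold Rdiv; ring.
  - rewrite Rmult_plus_distr_l, IH, Rpow_mult_distr. unfold Rdiv; ring.
Qed.

Lemma taylor_integral_estimate (w psi : R -> R) (s r L C : R) (n : nat) :
  (forall t, continuous w t) -> rapid_decay w -> smooth_exp_bounded psi ->
  0 < r -> r + Rabs s + 1 <= L -> (forall t, 0 <= t -> Rabs (w t) <= C * exp (- (L * t))) ->
  exists I : R, is_RInt_gen (fun t => w t * psi (s * t)) (at_point 0) (Rbar_locally p_infty) I /\
    Rabs (I - sum_f_R0 (fun k => s ^ k / INR (fact k) * Derive_n psi k 0 * moment w k) n)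
      <= C * (Rabs s / r) ^ S n.
Proof.
  intros Hc Hw Hpsi Hr HL HC.
  assert (HC0 : 0 <= C).
  { pose proof (HC 0 (Rle_refl 0)). pose proof (Rabs_pos (w 0)).
    rewrite Rmult_0_r, Ropp_0, exp_0 in *. lra. }
  assert (Habsorb : forall t B, 0 <= t -> 0 <= B ->
    Rabs (w t) * (B * exp ((r + Rabs s) * t)) <= B * (C * exp (- t))).
  { intros t B Ht HB. pose proof (exp_pos ((r + Rabs s) * t)).
    apply Rle_trans with (B * (C * (exp (- (L * t)) * exp ((r + Rabs s) * t)))).
    - replace (B * (C * (exp (- (L * t)) * exp ((r + Rabs s) * t))))
        with (B * exp ((r + Rabs s) * t) * (C * exp (- (L * t)))) by ring.
      rewrite Rmult_comm. apply Rmult_le_compat_l; [nra | apply HC, Ht].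
    - rewrite <- exp_plus. apply Rmult_le_compat_l, Rmult_le_compat_l, exp_le_compat; [lra | lra | nra]. }
  set (f := fun t => w t * psi (s * t)).
  assert (Hf : ex_RInt_gen f (at_point 0) (Rbar_locally p_infty)).
  { apply (ex_RInt_gen_exp_bound _ 0 C).
    - intros t. apply (continuous_mult (K := R_AbsRing)); [apply Hc |].
      apply (continuous_comp (fun t => s * t) psi); [| apply smooth_exp_bounded_continuous, Hpsi].
      apply (ex_derive_continuous (V := R_NormedModule)). auto_derive. exact I.
    - intros t Ht. unfold f. rewrite Rabs_mult, <- (Rmult_1_l (C * exp (- t))).
      eapply Rle_trans; [| apply Habsorb; lra]. apply Rmult_le_compat_l; [apply Rabs_pos |].
      rewrite Rmult_1_l. eapply Rle_trans; [apply smooth_exp_bounded_abs_le, Hpsi |].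
      apply exp_le_compat. rewrite Rabs_mult, (Rabs_pos_eq t Ht). nra. }
  exists (RInt_gen f (at_point 0) (Rbar_locally p_infty)).
  split; [apply (RInt_gen_correct (V := R_CompleteNormedModule)), Hf |].
  set (c := fun k => s ^ k / INR (fact k) * Derive_n psi k 0).
  pose proof (is_RInt_gen_sum_f_R0 (fun k t => w t * t ^ k) c (moment w) n
    (fun k => is_RInt_gen_moment w k Hc Hw)) as Hpoly.
  pose proof (is_RInt_gen_minus (V := R_NormedModule) _ _ _ _
    (RInt_gen_correct (V := R_CompleteNormedModule) _ Hf) Hpoly) as Hdiff.
  pose proof (is_RInt_gen_abs_le_exp _ 0 (C * (Rabs s / r) ^ S n) _ Hdiff) as Hbound.
  rewrite Ropp_0, exp_0, Rmult_1_r in Hbound. apply Hbound. intros t Ht.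
  change (Rabs (w t * psi (s * t) - sum_f_R0 (fun k => c k * (w t * t ^ k)) n)
    <= C * (Rabs s / r) ^ S n * exp (- t)).
  unfold c. rewrite <- taylor_poly_scaled, <- Rmult_minus_distr_l, Rabs_mult.
  replace (C * (Rabs s / r) ^ S n * exp (- t)) with ((Rabs s / r) ^ S n * (C * exp (- t))) by ring.
  eapply Rle_trans;
    [| apply Habsorb; [exact Ht | apply pow_le, Rdiv_le_0_compat; [apply Rabs_pos | lra]]].
  apply Rmult_le_compat_l; [apply Rabs_pos | apply smooth_exp_bounded_taylor_scaled; assumption].
Qed.

Lemma sum_f_R0_last (f : nat -> R) (m : nat) :
  (forall k, (k < m)%nat -> f k = 0) -> sum_f_R0 f m = f m.
Proof.
  intros Hf. destruct m as [|m]; [reflexivity |]. simpl.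
  enough (sum_f_R0 f m = 0) by lra.
  clear - Hf. induction m as [|m IH]; simpl.
  - apply Hf; lia.
  - rewrite IH by (intros; apply Hf; lia). rewrite (Hf (S m)) by lia. ring.
Qed.

Lemma taylor_integral_leading_term (w psi : R -> R) (s r L C : R) (m : nat) :
  (forall t, continuous w t) -> rapid_decay w -> smooth_exp_bounded psi ->
  0 < r -> r + Rabs s + 1 <= L -> (forall t, 0 <= t -> Rabs (w t) <= C * exp (- (L * t))) ->
  (forall k, (k < m)%nat -> Derive_n psi k 0 * moment w k = 0) ->
  exists I : R, is_RInt_gen (fun t => w t * psi (s * t)) (at_point 0) (Rbar_locally p_infty) I /\
    Rabs (I - s ^ m / INR (fact m) * (Derive_n psi m 0 * moment w m)) <= C * (Rabs s / r) ^ S m.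
Proof.
  intros Hc Hw Hpsi Hr HL HC Hz.
  destruct (taylor_integral_estimate w psi s r L C m Hc Hw Hpsi Hr HL HC) as [I [HI Hbound]].
  exists I. split; [exact HI |].
  rewrite sum_f_R0_last, Rmult_assoc in Hbound; [exact Hbound |].
  intros k Hk. rewrite Rmult_assoc, Hz by exact Hk. ring.
Qed.

(** * The kernel G *)

Definition G_profile (v : R) : R := exp (- (PI * v)) * (16 * PI ^ 2 * v ^ 2 - 24 * PI * v).

Definition G_ratio (t : R) : R := exp (- (PI * exp (4 * t) / 2)).

Lemma G_term_eq (t : R) (n : nat) : G_term t n = exp t * G_profile (INR n ^ 2 * exp (4 * t)).
Proof.
  unfold G_term, G_profile.
  replace (t - PI * INR n ^ 2 * exp (4 * t)) with (t + - (PI * (INR n ^ 2 * exp (4 * t)))) by ring.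
  replace (8 * t) with (4 * t + 4 * t) by ring.
  rewrite !exp_plus. ring.
Qed.

Lemma G_profile_abs_le (v : R) : 0 <= v -> Rabs (G_profile v) <= 176 * exp (- (PI * v / 2)).
Proof.
  intros Hv. unfold G_profile. pose proof PI_RGT_0.
  (* In terms of a = PI v / 2 the polynomial is 64 a^2 - 48 a, and a^2 / 2 <= e^a, a <= e^a. *)
  set (a := PI * v / 2).
  assert (Ha : 0 <= a) by (unfold a; nra).
  assert (E1 : a <= exp a) by (pose proof (exp_ineq1_le a); lra).
  assert (E2 : a ^ 2 / 2 <= exp a) by exact (pow_div_fact_le_exp a 2 Ha).
  assert (Hpoly : Rabs (16 * PI ^ 2 * v ^ 2 - 24 * PI * v) <= 176 * exp a)
    by (apply Rabs_le; unfold a in *; split; nra).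
  replace (- (PI * v)) with (- a + - a) by (unfold a; field).
  rewrite exp_plus, Rabs_mult, Rabs_pos_eq by (left; apply Rmult_lt_0_compat; apply exp_pos).
  fold a. assert (Hinv : exp (- a) * exp a = 1) by (rewrite <- exp_plus, Rplus_opp_l; apply exp_0).
  pose proof (exp_pos (- a)).
  apply Rle_trans with (exp (- a) * exp (- a) * (176 * exp a)); [apply Rmult_le_compat_l; nra | nra].
Qed.

Lemma G_profile_pos (v : R) : 1 <= v -> 0 < G_profile v.
Proof.
  intros Hv. unfold G_profile. pose proof PI2_1. apply Rmult_lt_0_compat; [apply exp_pos |].
  replace (16 * PI ^ 2 * v ^ 2 - 24 * PI * v) with (8 * PI * v * (2 * PI * v - 3)) by ring.
  apply Rmult_lt_0_compat; nra.
Qed.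

Lemma G_ratio_pos (t : R) : 0 < G_ratio t.
Proof. apply exp_pos. Qed.

Lemma G_ratio_antimono (s t : R) : s <= t -> G_ratio t <= G_ratio s.
Proof.
  intros Hst. apply exp_le_compat. pose proof PI_RGT_0.
  pose proof (exp_le_compat _ _ (Rmult_le_compat_l 4 _ _ ltac:(lra) Hst)). nra.
Qed.

Lemma G_ratio_le_half (t : R) : 0 <= t -> G_ratio t <= / 2.
Proof.
  intros Ht. eapply Rle_trans; [apply G_ratio_antimono, Ht |].
  unfold G_ratio. rewrite Rmult_0_r, exp_0, Rmult_1_r, exp_Ropp.
  pose proof (exp_ineq1_le (PI / 2)). pose proof PI2_1.
  apply Rinv_le_contravar; lra.
Qed.

Lemma G_term_abs_le (t : R) (n : nat) : Rabs (G_term t (S n)) <= 176 * exp t * G_ratio t ^ S n.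
Proof.
  rewrite G_term_eq. set (E := exp (4 * t)).
  assert (HE : 0 < E) by apply exp_pos. pose proof PI_RGT_0.
  assert (HN : 1 <= INR (S n)) by (rewrite S_INR; pose proof (pos_INR n); lra).
  assert (Hv : INR (S n) * E <= INR (S n) ^ 2 * E) by (apply Rmult_le_compat_r; nra).
  rewrite Rabs_mult, (Rabs_pos_eq (exp t)) by (left; apply exp_pos).
  replace (176 * exp t * G_ratio t ^ S n) with (exp t * (176 * G_ratio t ^ S n)) by ring.
  apply Rmult_le_compat_l; [left; apply exp_pos |].
  eapply Rle_trans; [apply G_profile_abs_le; nra |].
  apply Rmult_le_compat_l; [lra |].
  unfold G_ratio. rewrite <- exp_INR_mult. apply exp_le_compat. fold E. nra.
Qed.

Lemma G_term_nonneg (t : R) (n : nat) : 0 <= t -> 0 <= G_term t (S n).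
Proof.
  intros Ht. rewrite G_term_eq. apply Rmult_le_pos; [left; apply exp_pos |].
  left; apply G_profile_pos.
  assert (1 <= exp (4 * t)) by (rewrite <- exp_0; apply exp_le_compat; lra).
  assert (1 <= INR (S n)) by (rewrite S_INR; pose proof (pos_INR n); lra).
  nra.
Qed.

Lemma is_series_scal_pow_S (K q : R) :
  Rabs q < 1 -> is_series (fun n => K * q ^ S n) (K * (q / (1 - q))).
Proof.
  intros Hq. apply (is_series_scal_l K (fun n => q ^ S n)).
  apply (is_series_ext (fun n => q * q ^ n)); [reflexivity |].
  apply (is_series_scal_l q (fun n => q ^ n)), is_series_geom, Hq.
Qed.

Lemma Rabs_G_ratio_lt_1 (t : R) : Rabs (G_ratio t) < 1.
Proof.
  rewrite Rabs_pos_eq by (left; apply G_ratio_pos).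
  unfold G_ratio. rewrite <- exp_0. apply exp_increasing.
  pose proof PI_RGT_0. pose proof (exp_pos (4 * t)). nra.
Qed.

Lemma is_series_scal_G_ratio_pow (K t : R) :
  is_series (fun n => K * G_ratio t ^ S n) (K * (G_ratio t / (1 - G_ratio t))).
Proof. apply is_series_scal_pow_S, Rabs_G_ratio_lt_1. Qed.

Lemma ex_series_G_term (t : R) : ex_series (fun k => G_term t (S k)).
Proof.
  apply (ex_series_le (V := R_CompleteNormedModule) _ (fun n => 176 * exp t * G_ratio t ^ S n)).
  - intros n. apply G_term_abs_le.
  - eexists. apply is_series_scal_G_ratio_pow.
Qed.

Lemma G_pos (t : R) : 0 <= t -> 0 < G t.
Proof.
  intros Ht. unfold G. rewrite Series_incr_1 by apply ex_series_G_term.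
  assert (Htail : 0 <= Series (fun k => G_term t (S (S k)))).
  { set (tail := fun k => G_term t (S (S k))).
    replace 0 with (Series (fun k => 0 * tail k)) by (rewrite Series_scal_l; ring).
    apply Series_le; [intros n; rewrite Rmult_0_l; split; [lra | apply G_term_nonneg, Ht] |].
    exact (proj1 (ex_series_incr_1 _) (ex_series_G_term t)). }
  assert (Hfirst : 0 < G_term t 1).
  { rewrite G_term_eq. apply Rmult_lt_0_compat; [apply exp_pos |].
    apply G_profile_pos. replace (INR 1 ^ 2 * exp (4 * t)) with (exp (4 * t)) by (simpl; ring).
    rewrite <- exp_0. apply exp_le_compat. lra. }
  lra.
Qed.

Lemma G_le (t : R) : 0 <= t -> G t <= 352 * exp t * G_ratio t.
Proof.
  intros Ht. unfold G.
  eapply Rle_trans.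
  - apply Series_le; [| eexists; apply is_series_scal_G_ratio_pow].
    intros n. split; [apply G_term_nonneg, Ht | eapply Rle_trans; [apply Rle_abs | apply G_term_abs_le]].
  - rewrite (is_series_unique _ _ (is_series_scal_G_ratio_pow _ t)).
    pose proof (G_ratio_le_half t Ht). pose proof (G_ratio_pos t). pose proof (exp_pos t).
    replace (352 * exp t * G_ratio t)
      with (176 * exp t * (G_ratio t / (1 - G_ratio t)) * (2 * (1 - G_ratio t))) by (field; lra).
    assert (0 <= 176 * exp t * (G_ratio t / (1 - G_ratio t)))
      by (apply Rmult_le_pos; [lra | apply Rdiv_le_0_compat; lra]).
    nra.
Qed.

Lemma G_ratio_le_exp_neg (t : R) (p : nat) :
  G_ratio t <= INR (fact p) * (2 / PI) ^ p * exp (- (4 * INR p * t)).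
Proof.
  pose proof PI_RGT_0. pose proof (exp_pos (4 * t)).
  unfold G_ratio. eapply Rle_trans; [apply (exp_neg_le_fact_div_pow _ p); nra |].
  right. replace (PI * exp (4 * t) / 2) with (PI / 2 * exp (4 * t)) by field.
  replace (2 / PI) with (/ (PI / 2)) by (field; lra).
  rewrite Rpow_mult_distr, <- exp_INR_mult, pow_inv, exp_Ropp.
  replace (INR p * (4 * t)) with (4 * INR p * t) by ring.
  field. split; [apply Rgt_not_eq, exp_pos | apply pow_nonzero; lra].
Qed.

Lemma G_rapid_decay : rapid_decay G.
Proof.
  intros L. destruct (INR_archimed 1 ((L + 1) / 4)) as [p Hp]; [lra |].
  set (K := INR (fact p) * (2 / PI) ^ p).
  assert (HK : 0 <= K).
  { pose proof PI_RGT_0. apply Rmult_le_pos; [apply pos_INR | apply pow_le, Rdiv_le_0_compat; lra]. }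
  exists (352 * K). intros t Ht.
  rewrite Rabs_pos_eq by (left; apply G_pos, Ht).
  eapply Rle_trans; [apply G_le, Ht |].
  assert (Hdecay : exp t * exp (- (4 * INR p * t)) <= exp (- (L * t)))
    by (rewrite <- exp_plus; apply exp_le_compat; nra).
  assert (Hratio := G_ratio_le_exp_neg t p). fold K in Hratio.
  pose proof (exp_pos t). pose proof (exp_pos (- (4 * INR p * t))). nra.
Qed.

Lemma G_continuous (t : R) : continuous G t.
Proof.
  apply continuity_pt_filterlim.
  set (fn := fun k x => G_term x (S k)).
  assert (Hr : 0 < Rabs t + 1) by (pose proof (Rabs_pos t); lra).
  set (r := mkposreal _ Hr).
  set (An := fun n => 176 * exp r * G_ratio (- r) ^ S n).
  assert (Hcvn : CVN_r fn r).
  { exists An, (176 * exp r * (G_ratio (- r) / (1 - G_ratio (- r)))). split.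
    - apply is_series_Reals.
      apply (is_series_ext An); [| apply is_series_scal_G_ratio_pow].
      intros n. symmetry. apply Rabs_pos_eq. unfold An.
      pose proof (exp_pos r). pose proof (G_ratio_pos (- r)).
      apply Rmult_le_pos; [lra | apply pow_le; lra].
    - intros n x Hx. unfold Boule in Hx. rewrite Rminus_0_r in Hx.
      apply Rabs_def2 in Hx. eapply Rle_trans; [apply G_term_abs_le |]. unfold An.
      apply Rmult_le_compat; [| apply pow_le, Rlt_le, G_ratio_pos | |].
      + pose proof (exp_pos x); lra.
      + apply Rmult_le_compat_l; [lra | apply exp_le_compat; lra].
      + apply pow_incr. split; [apply Rlt_le, G_ratio_pos | apply G_ratio_antimono; lra]. }
  set (cv := fun x => exist (fun l => Un_cv (fun N => SP fn N x) l) (G x)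
    (proj1 (is_series_Reals _ _) (Series_correct _ (ex_series_G_term x)))).
  apply (CVU_continuity _ _ 0 r (CVN_CVU fn cv r Hcvn)).
  - intros n x _. apply continuity_pt_finite_SF. intros k _.
    apply continuity_pt_filterlim, (ex_derive_continuous (V := R_NormedModule)).
    unfold fn, G_term. auto_derive. exact I.
  - unfold Boule. rewrite Rminus_0_r. simpl. lra.
Qed.

(** * The real and imaginary parts of eta *)

Definition G_weight (phi : R -> R) (y t : R) : R := G t * phi (y * t).

Lemma G_weight_continuous (phi : R -> R) (y t : R) :
  (forall u, continuous phi u) -> continuous (G_weight phi y) t.
Proof.
  intros Hphi. apply (continuous_mult (K := R_AbsRing)); [apply G_continuous |].
  apply (continuous_comp (fun t => y * t) phi); [| apply Hphi].
  apply (ex_derive_continuous (V := R_NormedModule)). auto_derive. exact I.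
Qed.

Lemma G_weight_abs_le (phi : R -> R) (y t : R) :
  (forall u, Rabs (phi u) <= 1) -> Rabs (G_weight phi y t) <= Rabs (G t).
Proof.
  intros Hphi. unfold G_weight. rewrite Rabs_mult.
  pose proof (Hphi (y * t)). pose proof (Rabs_pos (G t)). pose proof (Rabs_pos (phi (y * t))). nra.
Qed.

Lemma G_weight_rapid_decay (phi : R -> R) (y : R) :
  (forall u, Rabs (phi u) <= 1) -> rapid_decay (G_weight phi y).
Proof.
  intros Hphi L. destruct (G_rapid_decay L) as [C HC]. exists C. intros t Ht.
  eapply Rle_trans; [apply G_weight_abs_le, Hphi | apply HC, Ht].
Qed.

Lemma Rabs_cos_le_1 (u : R) : Rabs (cos u) <= 1.
Proof. apply Rabs_le, COS_bound. Qed.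

Lemma Rabs_sin_le_1 (u : R) : Rabs (sin u) <= 1.
Proof. apply Rabs_le, SIN_bound. Qed.

Lemma G_weight_taylor_leading_term (phi psi : R -> R) (y s r L C : R) (m : nat) :
  (forall u, continuous phi u) -> (forall u, Rabs (phi u) <= 1) -> smooth_exp_bounded psi ->
  0 < r -> r + Rabs s + 1 <= L -> (forall t, 0 <= t -> Rabs (G t) <= C * exp (- (L * t))) ->
  (forall k, (k < m)%nat -> Derive_n psi k 0 * moment (G_weight phi y) k = 0) ->
  exists I : R,
    is_RInt_gen (fun t => G_weight phi y t * psi (s * t)) (at_point 0) (Rbar_locally p_infty) I /\
    Rabs (I - s ^ m / INR (fact m) * (Derive_n psi m 0 * moment (G_weight phi y) m))
      <= C * (Rabs s / r) ^ S m.
Proof.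
  intros Hc Hb Hpsi Hr HL HC. apply (taylor_integral_leading_term _ _ _ _ L); try assumption.
  - intros t. apply G_weight_continuous, Hc.
  - apply G_weight_rapid_decay, Hb.
  - intros t Ht. eapply Rle_trans; [apply G_weight_abs_le, Hb | apply HC, Ht].
Qed.

Lemma G_integral_pos : exists I : R, is_RInt_gen G (at_point 0) (Rbar_locally p_infty) I /\ 0 < I.
Proof.
  destruct (G_rapid_decay 1) as [C HC].
  assert (Hbound : forall t, 0 <= t -> Rabs (G t) <= C * exp (- t))
    by (intros t Ht; rewrite <- (Rmult_1_l t) at 2; apply HC, Ht).
  assert (Htail : ex_RInt_gen G (at_point 1) (Rbar_locally p_infty))
    by (apply (ex_RInt_gen_exp_bound _ 1 C G_continuous); intros; apply Hbound; lra).
  destruct Htail as [J HJ].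
  assert (HG01 : is_RInt_gen G (at_point 0) (at_point 1) (RInt G 0 1)).
  { apply is_RInt_gen_at_point, (RInt_correct (V := R_CompleteNormedModule)).
    apply (ex_RInt_continuous (V := R_CompleteNormedModule)). intros; apply G_continuous. }
  exists (plus (RInt G 0 1) J). split; [exact (is_RInt_gen_Chasles _ 1 _ _ HG01 HJ) |].
  assert (0 < RInt G 0 1).
  { apply RInt_gt_0; [lra | intros; apply G_pos; lra | intros; apply G_continuous]. }
  assert (0 <= J) by (apply (is_RInt_gen_ge_0 G 1 J HJ); intros; left; apply G_pos; lra).
  change (0 < RInt G 0 1 + J). lra.
Qed.

(* The k-th derivatives in x, at x = 0, of the real and imaginary parts of [eta (x, y)]. *)
Definition eta_coef_re (y : R) (k : nat) : R := Derive_n cosh k 0 * moment (G_weight cos y) k.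
Definition eta_coef_im (y : R) (k : nat) : R := Derive_n sinh k 0 * moment (G_weight sin y) k.

Lemma le_0_of_le_geometric (a c q : R) : 0 <= q < 1 -> (forall n, a <= c * q ^ S n) -> a <= 0.
Proof.
  intros Hq Ha. apply Rnot_lt_le. intros Hpos. pose proof (Rabs_pos c).
  destruct (pow_lt_1_zero q ltac:(rewrite Rabs_pos_eq; lra) (a / (Rabs c + 1))) as [N HN];
    [apply Rdiv_lt_0_compat; lra |].
  specialize (HN (S N) (le_S _ _ (le_n N))). specialize (Ha N).
  rewrite Rabs_pos_eq in HN by (apply pow_le; lra).
  apply (Rmult_lt_compat_l (Rabs c + 1)) in HN; [| lra].
  replace ((Rabs c + 1) * (a / (Rabs c + 1))) with a in HN by (field; lra).
  assert (c * q ^ S N <= Rabs c * q ^ S N)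
    by (apply Rmult_le_compat_r; [apply pow_le; lra | apply Rle_abs]).
  pose proof (pow_le q (S N) (proj1 Hq)). nra.
Qed.

Lemma eta_coef_not_all_zero (y : R) : ~ (forall k, eta_coef_re y k = 0 /\ eta_coef_im y k = 0).
Proof.
  intros Hz.
  destruct G_integral_pos as [I0 [HI0 HI0pos]].
  (* Any r > |y| works: the Taylor remainders are then O((|y| / r)^n). *)
  set (r := 2 * Rabs y + 1).
  assert (Hr : 0 < r) by (unfold r; pose proof (Rabs_pos y); lra).
  destruct (G_rapid_decay (r + Rabs y + 1)) as [C HC].
  assert (Hcos : forall k, Derive_n cos k 0 * moment (G_weight cos y) k = 0).
  { intros k. rewrite Derive_n_cos_0, Rmult_assoc. fold (eta_coef_re y k).
    rewrite (proj1 (Hz k)). ring. }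
  assert (Hsin : forall k, Derive_n sin k 0 * moment (G_weight sin y) k = 0).
  { intros k. rewrite Derive_n_sin_0, Rmult_assoc. fold (eta_coef_im y k).
    rewrite (proj2 (Hz k)). ring. }
  enough (Hsmall : forall n, I0 <= 2 * C * (Rabs y / r) ^ S n).
  { assert (Hq : 0 <= Rabs y / r < 1).
    { split; [apply Rdiv_le_0_compat; [apply Rabs_pos | lra] |].
      apply (Rmult_lt_reg_r r); [exact Hr |]. unfold Rdiv. rewrite Rmult_assoc, Rinv_l by lra.
      unfold r. pose proof (Rabs_pos y). lra. }
    pose proof (le_0_of_le_geometric _ _ _ Hq Hsmall). lra. }
  intros n.
  destruct (G_weight_taylor_leading_term cos cos y y r (r + Rabs y + 1) C n continuous_cos
    Rabs_cos_le_1 cos_smooth_exp_bounded Hr ltac:(lra) HC (fun k _ => Hcos k)) as [Ic [HIc Hc]].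
  destruct (G_weight_taylor_leading_term sin sin y y r (r + Rabs y + 1) C n continuous_sin
    Rabs_sin_le_1 sin_smooth_exp_bounded Hr ltac:(lra) HC (fun k _ => Hsin k)) as [Is [HIs Hs]].
  rewrite Hcos, Rmult_0_r, Rminus_0_r in Hc. rewrite Hsin, Rmult_0_r, Rminus_0_r in Hs.
  assert (HI : I0 = Ic + Is).
  { rewrite <- (is_RInt_gen_unique _ _ HI0).
    apply is_RInt_gen_unique, (is_RInt_gen_ext (V := R_NormedModule)
      (fun t => plus (G_weight cos y t * cos (y * t)) (G_weight sin y t * sin (y * t)))).
    - apply filter_forall. intros ab t _. unfold G_weight, plus; simpl.
      rewrite <- (Rmult_1_r (G t)) at 3. rewrite <- (sin2_cos2 (y * t)). unfold Rsqr. ring.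
    - exact (is_RInt_gen_plus _ _ _ _ HIc HIs). }
  apply Rabs_le_between in Hc. apply Rabs_le_between in Hs. lra.
Qed.

Lemma is_RInt_gen_pair {Fa Fb : (R -> Prop) -> Prop} {FFa : Filter Fa} {FFb : Filter Fb}
  (f1 f2 : R -> R) (l1 l2 : R) :
  is_RInt_gen f1 Fa Fb l1 -> is_RInt_gen f2 Fa Fb l2 ->
  is_RInt_gen (V := C_R_NormedModule) (fun t => (f1 t, f2 t)) Fa Fb (l1, l2).
Proof.
  intros H1 H2 P [eps HP].
  specialize (H1 _ (locally_ball l1 eps)). specialize (H2 _ (locally_ball l2 eps)).
  unfold filtermapi in *. generalize (filter_and _ _ H1 H2). apply filter_imp.
  intros ab [[v1 [Hv1 Hb1]] [v2 [Hv2 Hb2]]].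
  exists (v1, v2). split.
  - apply (is_RInt_fct_extend_pair (U := R_NormedModule) (V := R_NormedModule)); assumption.
  - apply HP. split; assumption.
Qed.

Lemma eta_integrand_eq (x y t : R) :
  Cmult (RtoC (G t)) (Ccosh (Cmult (x, y) (RtoC t))) =
  (G_weight cos y t * cosh (x * t), G_weight sin y t * sinh (x * t)).
Proof.
  unfold Ccosh, Cexp, Cmult, Cplus, Copp, Cinv, RtoC, Re, Im, G_weight, cosh, sinh; cbn [fst snd].
  replace (x * t - y * 0) with (x * t) by ring.
  replace (x * 0 + y * t) with (y * t) by ring.
  rewrite cos_neg, sin_neg. f_equal; field.
Qed.

Lemma eta_eq (x y A B : R) :
  is_RInt_gen (fun t => G_weight cos y t * cosh (x * t)) (at_point 0) (Rbar_locally p_infty) A ->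
  is_RInt_gen (fun t => G_weight sin y t * sinh (x * t)) (at_point 0) (Rbar_locally p_infty) B ->
  eta (x, y) = (A, B).
Proof.
  intros HA HB. unfold eta. apply (is_RInt_gen_unique (V := C_R_CompleteNormedModule)).
  apply (is_RInt_gen_ext (V := C_R_NormedModule)
    (fun t => (G_weight cos y t * cosh (x * t), G_weight sin y t * sinh (x * t)))).
  - apply filter_forall. intros ab t _. symmetry. apply eta_integrand_eq.
  - exact (is_RInt_gen_pair _ _ _ _ HA HB).
Qed.

Lemma eta_taylor_leading_term (y : R) (m : nat) :
  (forall k, (k < m)%nat -> eta_coef_re y k = 0 /\ eta_coef_im y k = 0) ->
  exists K, forall x, Rabs x <= 1 ->
    Rabs (Re (eta (x, y)) - x ^ m / INR (fact m) * eta_coef_re y m) <= K * Rabs x ^ S m /\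
    Rabs (Im (eta (x, y)) - x ^ m / INR (fact m) * eta_coef_im y m) <= K * Rabs x ^ S m.
Proof.
  intros Hbelow. destruct (G_rapid_decay 3) as [K HK]. exists K. intros x Hx.
  destruct (G_weight_taylor_leading_term cos cosh y x 1 3 K m continuous_cos Rabs_cos_le_1
    cosh_smooth_exp_bounded Rlt_0_1 ltac:(lra) HK (fun k Hk => proj1 (Hbelow k Hk))) as [A [HA HAb]].
  destruct (G_weight_taylor_leading_term sin sinh y x 1 3 K m continuous_sin Rabs_sin_le_1
    sinh_smooth_exp_bounded Rlt_0_1 ltac:(lra) HK (fun k Hk => proj2 (Hbelow k Hk))) as [B [HB HBb]].
  rewrite (eta_eq x y A B HA HB). unfold Rdiv in HAb, HBb. rewrite Rinv_1, Rmult_1_r in HAb, HBb.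
  split; assumption.
Qed.

Lemma coef_abs_le_of_leading_term (v x K : R) (m : nat) : x <> 0 ->
  Rabs (x ^ m / INR (fact m) * v) <= K * Rabs x ^ S m -> Rabs v <= INR (fact m) * K * Rabs x.
Proof.
  intros Hx Hv. pose proof (INR_fact_lt_0 m). pose proof (Rabs_pos_lt x Hx).
  pose proof (pow_lt (Rabs x) m ltac:(lra)).
  rewrite Rabs_mult, Rabs_div, <- RPow_abs, (Rabs_pos_eq (INR (fact m))) in Hv by lra.
  apply (Rmult_le_reg_l (Rabs x ^ m / INR (fact m))); [apply Rdiv_lt_0_compat; lra |].
  eapply Rle_trans; [exact Hv |]. right. simpl. field. lra.
Qed.

Lemma nonzero_near_0_of_leading_term (f : R -> C) (a b K : R) (m : nat) :
  ~ (a = 0 /\ b = 0) ->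
  (forall x, Rabs x <= 1 ->
     Rabs (Re (f x) - x ^ m / INR (fact m) * a) <= K * Rabs x ^ S m /\
     Rabs (Im (f x) - x ^ m / INR (fact m) * b) <= K * Rabs x ^ S m) ->
  exists eps, 0 < eps /\ forall x, 0 < Rabs x < eps -> f x <> RtoC 0.
Proof.
  intros Hab Hf.
  assert (Hc : 0 < Rabs a + Rabs b).
  { destruct (Req_dec a 0) as [-> | Ha]; [destruct (Req_dec b 0) as [-> | Hb]; [tauto |] |].
    - rewrite Rabs_R0. pose proof (Rabs_pos_lt b Hb). lra.
    - pose proof (Rabs_pos_lt a Ha). pose proof (Rabs_pos b). lra. }
  set (D := 2 * INR (fact m) * Rabs K + 1).
  assert (HD : 0 < D) by (unfold D; pose proof (INR_fact_lt_0 m); pose proof (Rabs_pos K); nra).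
  exists (Rmin 1 ((Rabs a + Rabs b) / D)).
  split; [apply Rmin_case; [lra | apply Rdiv_lt_0_compat; lra] |].
  intros x [Hx0 Hxeps] Hzero.
  assert (Hx1 : Rabs x <= 1) by (pose proof (Rmin_l 1 ((Rabs a + Rabs b) / D)); lra).
  assert (HxD : D * Rabs x < Rabs a + Rabs b).
  { pose proof (Rmin_r 1 ((Rabs a + Rabs b) / D)).
    apply (Rmult_lt_compat_l D) in Hxeps; [| exact HD].
    eapply Rlt_le_trans; [exact Hxeps |]. apply Rle_trans with (D * ((Rabs a + Rabs b) / D)).
    - apply Rmult_le_compat_l; lra.
    - right. field. lra. }
  destruct (Hf x Hx1) as [Hre Him]. rewrite Hzero in Hre, Him. simpl in Hre, Him.
  rewrite Rminus_0_l, Rabs_Ropp in Hre, Him.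
  assert (Hx : x <> 0) by (intros ->; rewrite Rabs_R0 in Hx0; lra).
  pose proof (coef_abs_le_of_leading_term a x K m Hx Hre).
  pose proof (coef_abs_le_of_leading_term b x K m Hx Him).
  assert (INR (fact m) * K * Rabs x <= INR (fact m) * Rabs K * Rabs x).
  { apply Rmult_le_compat_r; [apply Rabs_pos |].
    apply Rmult_le_compat_l; [apply pos_INR | apply Rle_abs]. }
  unfold D in HxD. lra.
Qed.

Theorem theorem2 :
  forall y : R, exists eps : R, 0 < eps /\
    forall x : R, 0 < Rabs x < eps -> eta (x, y) <> RtoC 0.
Proof.
  intros y.
  set (P := fun k => ~ (eta_coef_re y k = 0 /\ eta_coef_im y k = 0)).
  destruct (classic (exists k, P k)) as [Hex | Hnone].
  - destruct (dec_inh_nat_subset_has_unique_least_element P (fun k => classic (P k)) Hex)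
      as [m [[Hm Hleast] _]].
    assert (Hbelow : forall k, (k < m)%nat -> eta_coef_re y k = 0 /\ eta_coef_im y k = 0).
    { intros k Hk. apply NNPP. intros Hk'. specialize (Hleast k Hk'). lia. }
    destruct (eta_taylor_leading_term y m Hbelow) as [K HK].
    exact (nonzero_near_0_of_leading_term (fun x => eta (x, y)) _ _ K m Hm HK).
  - exfalso. apply (eta_coef_not_all_zero y).
    intros k. apply NNPP. intros Hk. apply Hnone. exists k. exact Hk.
Qed.
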